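(* Let $H\ge1$, $c_a\ge0$, $c_R>0$, $\beta=c_a/c_R$. Consider two patients $j\in\{u,l\}$ with readmission probabilities $p^j_{h,0},p^j_{h,1}\in[0,1)$, $p^j_{h,0}\ge p^j_{h,1}$, $h=1,\dots,H$, and treatment effects $\Delta^j_h=p^j_{h,0}-p^j_{h,1}$. For each patient define $V^j_{H+1}=0$, $V^j_h=\min\{c_a+p^j_{h,1}c_R+(1-p^j_{h,1})V^j_{h+1},\ p^j_{h,0}c_R+(1-p^j_{h,0})V^j_{h+1}\}$, and the optimal action $a^{*,j}_h=1$ if $\Delta^j_h>\beta/(1-V^j_{h+1}/c_R)$ and $a^{*,j}_h=0$ otherwise. Suppose that for all $1\le h\le H$, $$\Delta^l_h-\Delta^u_h<\frac{\beta}{\prod_{i=h+1}^H(1-p^l_{i,1})}-\frac{\beta}{\prod_{i=h+1}^H(1-p^u_{i,0})}.$$ Then for every $1\le h\le H$, $a^{*,l}_h=1$ implies $a^{*,u}_h=1$.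
   Context: Empty products equal $1$. The action rule $a^{*,j}_h=1$ iff $\Delta^j_h>\beta/(1-V^j_{h+1}/c_R)$ is the optimal (cost-minimizing, ties broken toward no intervention) decision in the post-discharge MDP with intervention cost $c_a$ and readmission cost $c_R$. *)

From mathcomp Require Import all_boot all_order all_algebra.
Set Implicit Arguments. Unset Strict Implicit. Unset Printing Implicit Defensive.
Import Order.TTheory GRing.Theory Num.Theory.
Local Open Scope ring_scope.

Section Readmission.
Variables (R : realFieldType) (H : nat) (ca cR : R) (p0 p1 : nat -> R).

(* Vaux k = V_{H+1-k}; the period handled at step k'.+1 is h = H - k'. *)
Fixpoint Vaux (k : nat) : R :=
  match k with
  | 0 => 0
  | k'.+1 =>
      let h := (H - k')%N in
      Num.min (ca + p1 h * cR + (1 - p1 h) * Vaux k')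
              (p0 h * cR + (1 - p0 h) * Vaux k')
  end.

Definition Vfun (h : nat) : R := Vaux (H.+1 - h).

Definition Delta (h : nat) : R := p0 h - p1 h.

Definition opt_action (h : nat) : bool :=
  (ca / cR) / (1 - Vfun h.+1 / cR) < Delta h.

End Readmission.

From mathcomp Require Import all_boot all_order all_algebra.
From mathcomp Require Import ring lra zify.
Set Implicit Arguments. Unset Strict Implicit.
Import Order.TTheory GRing.Theory Num.Theory.
Local Open Scope ring_scope.

(* Write W_h = 1 - V_h / c_R.  One Bellman step multiplies W by a factor
   between 1 - p_{h,0} (no intervention is always allowed) and 1 - p_{h,1}
   (every action costs at least the intervened risk), so
     prod_{i > h} (1 - p_{i,0}) <= W_{h+1} <= prod_{i > h} (1 - p_{i,1}).
   Hence patient u's threshold beta / W^u_{h+1} is at most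
   beta / prod (1 - p^u_{i,0}) and patient l's is at least
   beta / prod (1 - p^l_{i,1}); the gap hypothesis closes the argument. *)

Section ValueBounds.

Variables (R : realFieldType) (ca cR : R).
Hypotheses (ca_ge0 : 0 <= ca) (cR_gt0 : 0 < cR).

Definition bellman (p0 p1 v : R) : R :=
  Num.min (ca + p1 * cR + (1 - p1) * v) (p0 * cR + (1 - p0) * v).

Lemma bellman_le_no_action (p0 p1 v : R) :
  bellman p0 p1 v <= p0 * cR + (1 - p0) * v.
Proof. by rewrite /bellman ge_min lexx orbT. Qed.

Lemma bellman_ge_treated (p0 p1 v : R) : p1 <= p0 -> v <= cR ->
  p1 * cR + (1 - p1) * v <= bellman p0 p1 v.
Proof.
move=> p1_le_p0 v_le; rewrite /bellman le_min -addrA lerDr ca_ge0 /= -subr_ge0.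
have -> : p0 * cR + (1 - p0) * v - (p1 * cR + (1 - p1) * v)
          = (p0 - p1) * (cR - v) by ring.
by apply: mulr_ge0; rewrite subr_ge0.
Qed.

Lemma survival_bellman_ge (p0 p1 v : R) :
  (1 - p0) * (1 - v / cR) <= 1 - bellman p0 p1 v / cR.
Proof.
have -> : (1 - p0) * (1 - v / cR) = 1 - (p0 * cR + (1 - p0) * v) / cR.
  by field; rewrite gt_eqF.
by rewrite lerD2l lerN2 ler_pM2r ?invr_gt0 // bellman_le_no_action.
Qed.

Lemma survival_bellman_le (p0 p1 v : R) : p1 <= p0 -> v <= cR ->
  1 - bellman p0 p1 v / cR <= (1 - p1) * (1 - v / cR).
Proof.
move=> p1_le_p0 v_le.
have -> : (1 - p1) * (1 - v / cR) = 1 - (p1 * cR + (1 - p1) * v) / cR.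
  by field; rewrite gt_eqF.
by rewrite lerD2l lerN2 ler_pM2r ?invr_gt0 // bellman_ge_treated.
Qed.

Variables (H : nat) (p0 p1 : nat -> R).
Hypothesis p_range : forall h : nat, (1 <= h <= H)%N -> p1 h <= p0 h < 1.

Let V := Vaux H ca cR p0 p1.

Lemma VauxS (k : nat) : V k.+1 = bellman (p0 (H - k)) (p1 (H - k)) (V k).
Proof. by []. Qed.

Lemma survival_Vaux_bounds (k : nat) : (k <= H)%N ->
  [/\ 0 < \prod_(H.+1 - k <= i < H.+1) (1 - p0 i),
      \prod_(H.+1 - k <= i < H.+1) (1 - p0 i) <= 1 - V k / cR
    & 1 - V k / cR <= \prod_(H.+1 - k <= i < H.+1) (1 - p1 i)].
Proof.
elim: k => [|k IH] kH; first by rewrite subn0 !big_geq // mul0r subr0 ltr01.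
have [P_gt0 P_le W_le] := IH (ltnW kH).
have hk_range : (1 <= H - k <= H)%N by lia.
have /andP[p1_le_p0 p0_lt1] := p_range hk_range.
have -> : (H.+1 - k.+1 = H - k)%N by lia.
have hk_lt : (H - k < H.+1)%N by lia.
have hk_succ : ((H - k).+1 = H.+1 - k)%N by lia.
rewrite !(big_ltn hk_lt) hk_succ VauxS.
have v_le : V k <= cR.
  have : 0 < 1 - V k / cR := lt_le_trans P_gt0 P_le.
  by rewrite subr_gt0 ltr_pdivrMr // mul1r => /ltW.
split.
- by rewrite mulr_gt0 // subr_gt0.
- apply: le_trans; last exact: survival_bellman_ge.
  by rewrite ler_wpM2l // subr_ge0 ltW.
- apply: le_trans; first exact: survival_bellman_le p1_le_p0 v_le.
  by rewrite ler_wpM2l // subr_ge0 ltW // (le_lt_trans p1_le_p0).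
Qed.

Lemma survival_Vfun_bounds (h : nat) : (h <= H)%N ->
  [/\ 0 < \prod_(h.+1 <= i < H.+1) (1 - p0 i),
      \prod_(h.+1 <= i < H.+1) (1 - p0 i) <= 1 - Vfun H ca cR p0 p1 h.+1 / cR
    & 1 - Vfun H ca cR p0 p1 h.+1 / cR <= \prod_(h.+1 <= i < H.+1) (1 - p1 i)].
Proof.
move=> hH; rewrite /Vfun subSS.
have -> : h.+1 = (H.+1 - (H - h))%N by lia.
exact: survival_Vaux_bounds (leq_subr h H).
Qed.

End ValueBounds.

Lemma ler_wpdiv2l (R : realFieldType) (c x y : R) :
  0 <= c -> 0 < x -> x <= y -> c / y <= c / x.
Proof.
move=> c_ge0 x_gt0 xy; rewrite ler_wpM2l // lef_pV2 ?posrE //.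
exact: lt_le_trans xy.
Qed.

Theorem mainTheorem5 (R : realFieldType) (H : nat) (ca cR : R)
    (p0u p1u p0l p1l : nat -> R) :
  (1 <= H)%N -> 0 <= ca -> 0 < cR ->
  (forall h : nat, (1 <= h <= H)%N ->
     [/\ 0 <= p1u h, p1u h <= p0u h & p0u h < 1]) ->
  (forall h : nat, (1 <= h <= H)%N ->
     [/\ 0 <= p1l h, p1l h <= p0l h & p0l h < 1]) ->
  (forall h : nat, (1 <= h <= H)%N ->
     Delta p0l p1l h - Delta p0u p1u h <
       (ca / cR) / (\prod_(h.+1 <= i < H.+1) (1 - p1l i))
       - (ca / cR) / (\prod_(h.+1 <= i < H.+1) (1 - p0u i))) ->
  forall h : nat, (1 <= h <= H)%N ->
    opt_action H ca cR p0l p1l h -> opt_action H ca cR p0u p1u h.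
Proof.
move=> _ ca_ge0 cR_gt0 pu pl gap h hH; rewrite /opt_action.
have beta_ge0 : 0 <= ca / cR by rewrite divr_ge0 // ltW.
have /andP[_ h_le] := hH.
have risk_ordered (p0 p1 : nat -> R) :
    (forall i, (1 <= i <= H)%N -> [/\ 0 <= p1 i, p1 i <= p0 i & p0 i < 1]) ->
    forall i, (1 <= i <= H)%N -> p1 i <= p0 i < 1.
  by move=> hp i /hp[_ -> ->].
have [Pu_gt0 Pu_le _] :=
  survival_Vfun_bounds ca_ge0 cR_gt0 (risk_ordered _ _ pu) h_le.
have [Pl_gt0 Pl_le Wl_le] :=
  survival_Vfun_bounds ca_ge0 cR_gt0 (risk_ordered _ _ pl) h_le.
have thr_u := ler_wpdiv2l beta_ge0 Pu_gt0 Pu_le.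
have thr_l := ler_wpdiv2l beta_ge0 (lt_le_trans Pl_gt0 Pl_le) Wl_le.
move: (gap h hH) => {}gap act_l; lra.
Qed.
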